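(* Let $\theta_1,\theta_2>0$, $\theta=\theta_1+\theta_2$, $p=\theta_1/\theta$, $\beta>0$, $\phi=\theta/\beta$, and let $r_1,r_2=\frac12\big(1-\phi\pm\sqrt{(1-\phi)^2+4\phi p}\big)$ (so $0<r_1<1$, $r_2<0$). Let $a=(r_1-r_2)/2>0$, $b=(1-r_1)/(1-r_2)\in(0,1)$, $c=-r_1/r_2>0$. Let \[ \mu(t)=r_1+(r_1-r_2)\frac{b\,e^{-\beta(r_1-r_2)t/2}}{1-b\,e^{-\beta(r_1-r_2)t/2}},\qquad \nu(t)=r_1+(r_1-r_2)\frac{\frac{r_1}{r_2}e^{-\beta(r_1-r_2)t/2}}{1-\frac{r_1}{r_2}e^{-\beta(r_1-r_2)t/2}}, \] and let $p_{11}=\mathbb{E}[\mu(\tau)]$, $p_{21}=\mathbb{E}[\nu(\tau)]$ with $\tau$ exponential of rate 1. Then \[ p_{11}=r_1+2b^{-1/(a\beta)}\beta^{-1}\int_0^by^{1/(a\beta)}(1-y)^{-1}dy=r_1+2\beta^{-1}\sum_{k=0}^\infty\frac{b^{k+1}}{1/(a\beta)+k+1}, \] \begin{align*} p_{21}&=r_1-2c^{-1/(a\beta)}\beta^{-1}\int_0^{c/(1+c)}y^{1/(a\beta)}(1-y)^{-1/(a\beta)-1}dy\\ &=r_1-2c^{-1/(a\beta)}\beta^{-1}\sum_{k=0}^\infty\frac{\big((a\beta+1)/(a\beta)\big)_{(k)}}{k!}\frac{\big(c/(1+c)\big)^{1/(a\beta)+k+1}}{1/(a\beta)+k+1}, \end{align*}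 where $a_{(k)}=a(a+1)\cdots(a+k-1)$.
   Context: $\mu(t)$ and $\nu(t)$ are the solutions of $\dot\chi=\tfrac12(\theta_1-\theta\chi)+\tfrac12\beta\chi(1-\chi)$ with $\chi(0)=1$ and $\chi(0)=0$ respectively; $p_{11},p_{21}$ are the entries of the transition matrix between the types of successive whole-population replacements in the star-shaped Fleming–Viot model with mutation and selection. *)

From Stdlib Require Import Reals Arith Factorial.
From Coquelicot Require Import Coquelicot.
Open Scope R_scope.

Fixpoint rising (a : R) (k : nat) : R :=
  match k with
  | O => 1
  | S k' => rising a k' * (a + INR k')
  end.

Definition theta (th1 th2 : R) : R := th1 + th2.
Definition pp (th1 th2 : R) : R := th1 / theta th1 th2.
Definition phi (th1 th2 beta : R) : R := theta th1 th2 / beta.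

Definition r1 (th1 th2 beta : R) : R :=
  let f := phi th1 th2 beta in
  (1 - f + sqrt ((1 - f) ^ 2 + 4 * f * pp th1 th2)) / 2.
Definition r2 (th1 th2 beta : R) : R :=
  let f := phi th1 th2 beta in
  (1 - f - sqrt ((1 - f) ^ 2 + 4 * f * pp th1 th2)) / 2.

Definition aa (th1 th2 beta : R) : R := (r1 th1 th2 beta - r2 th1 th2 beta) / 2.
Definition bb (th1 th2 beta : R) : R := (1 - r1 th1 th2 beta) / (1 - r2 th1 th2 beta).
Definition cc (th1 th2 beta : R) : R := - r1 th1 th2 beta / r2 th1 th2 beta.

Definition mu (th1 th2 beta : R) (t : R) : R :=
  let R1 := r1 th1 th2 beta in let R2 := r2 th1 th2 beta in
  let e := exp (- beta * (R1 - R2) * t / 2) in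
  R1 + (R1 - R2) * (bb th1 th2 beta * e / (1 - bb th1 th2 beta * e)).

Definition nu (th1 th2 beta : R) (t : R) : R :=
  let R1 := r1 th1 th2 beta in let R2 := r2 th1 th2 beta in
  let e := exp (- beta * (R1 - R2) * t / 2) in
  R1 + (R1 - R2) * ((R1 / R2) * e / (1 - (R1 / R2) * e)).

(* E[g(tau)] for tau ~ Exp(1): the improper integral of g(t) e^{-t} over
   [0, +oo), i.e. "expectation of g(tau) equals v". *)
Definition exp1_expectation (g : R -> R) (v : R) : Prop :=
  is_RInt_gen (fun t => g t * exp (- t)) (at_point 0) (Rbar_locally p_infty) v.

(* Both expectations are computed from an explicit antiderivative.  With
   k = beta (r1 - r2) / 2 and alpha = 1/k, along y(t) = q e^(-kt) one has
   y^alpha = q^alpha e^(-t), so (mu(t) - r1) e^(-t) is a constant multiple of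
   d/dt F(y(t)) where F'(y) = y^alpha / (1 - y); integrating over [0, oo) gives
   E[mu(tau)] = r1 + (2/beta) b^(-alpha) F(b).  For nu the logistic
   substitution z = c e^(-kt) / (1 + c e^(-kt)) plays the same role with
   F'(z) = z^alpha (1 - z)^(-alpha-1).  Expanding 1/(1 - y) geometrically and
   (1 - z)^(-alpha-1) binomially, F(y) = y^(alpha+1) sum_k c_k y^k with
   c_k = 1/(alpha+k+1), resp. ((alpha+1)_(k)/k!)/(alpha+k+1); this one function
   is both the integral from 0 and the sum of the series. *)

From Stdlib Require Import Reals Factorial Lra.
From Coquelicot Require Import Coquelicot.
Open Scope R_scope.

Lemma Rpower_gt_0 (x s : R) : 0 < Rpower x s.
Proof. apply exp_pos. Qed.

Lemma Rpower_1_l (s : R) : Rpower 1 s = 1.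
Proof. unfold Rpower. rewrite ln_1, Rmult_0_r. apply exp_0. Qed.

Lemma Rpower_exp (u s : R) : Rpower (exp u) s = exp (s * u).
Proof. unfold Rpower. rewrite ln_exp. reflexivity. Qed.

Lemma Rpower_Rinv (x s : R) : 0 < x -> Rpower (/ x) s = Rpower x (- s).
Proof. intros Hx. unfold Rpower. rewrite ln_Rinv by exact Hx. f_equal. ring. Qed.

Lemma Rpower_mul_exp (x s k t : R) : 0 < x -> s * k = 1 ->
  Rpower (x * exp (- k * t)) s = Rpower x s * exp (- t).
Proof.
  intros Hx Hsk. rewrite <- Rpower_mult_distr, Rpower_exp by (apply exp_pos || exact Hx).
  f_equal. f_equal. replace (- t) with (- (s * k) * t) by (rewrite Hsk; ring). ring.
Qed.

Lemma Rdiv_1_plus_bounds (x : R) : 0 < x -> 0 < x / (1 + x) < 1 /\ x / (1 + x) < x.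
Proof.
  intros Hx. assert (E : x = x / (1 + x) * (1 + x)) by (field; lra).
  assert (Hpos : 0 < x / (1 + x)) by (apply Rdiv_lt_0_compat; lra).
  split; [split; [exact Hpos|]|]; nra.
Qed.

Lemma mul_exp_lt_1 (q k t : R) : 0 < q < 1 -> 0 < k -> ln q / k < t -> q * exp (- k * t) < 1.
Proof.
  intros Hq Hk Ht. rewrite <- (exp_ln q) at 1 by lra. rewrite <- exp_plus, <- exp_0.
  apply exp_increasing. apply Rmult_lt_compat_l with (r := k) in Ht; [|exact Hk].
  replace (k * (ln q / k)) with (ln q) in Ht by (field; lra). lra.
Qed.

Lemma Rpower_logistic (x s : R) : 0 < x ->
  Rpower (x / (1 + x)) s * Rpower (1 - x / (1 + x)) (- s - 1) = Rpower x s * (1 + x).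
Proof.
  intros Hx.
  replace (1 - x / (1 + x)) with (/ (1 + x)) by (field; lra).
  unfold Rdiv. rewrite <- Rpower_mult_distr, !Rpower_Rinv by (try apply Rinv_0_lt_compat; lra).
  transitivity (Rpower x s * (Rpower (1 + x) (- s) * Rpower (1 + x) (- (- s - 1)))); [ring|].
  rewrite <- Rpower_plus. replace (- s + - (- s - 1)) with 1 by ring.
  rewrite Rpower_1 by lra. reflexivity.
Qed.

Lemma is_derive_Rpower (s y : R) : 0 < y ->
  is_derive (fun y => Rpower y s) y (s * Rpower y (s - 1)).
Proof. intros Hy. apply is_derive_Reals, derivable_pt_lim_power, Hy. Qed.

Lemma Rpower_at_0_right (s : R) : 0 < s ->
  filterlim (fun y => Rpower y s) (at_right 0) (locally 0).
Proof.
  intros Hs. unfold Rpower.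
  apply (filterlim_comp _ _ _ (fun y => s * ln y) exp _ (Rbar_locally m_infty));
    [|apply is_lim_exp_m].
  eapply filterlim_comp; [apply is_lim_ln_0|].
  assert (H := is_lim_scal_l (fun u => u) s m_infty m_infty (is_lim_id m_infty)).
  rewrite (is_Rbar_mult_unique _ _ _ (is_Rbar_mult_sym _ _ _ (is_Rbar_mult_m_infty_pos s Hs))) in H.
  exact H.
Qed.

Lemma continuous_at_right (k : R -> R) (x : R) :
  continuous k x -> filterlim k (at_right x) (locally (k x)).
Proof. apply filterlim_filter_le_1, filter_le_within. Qed.

Lemma Rpower_mul_at_0_right (s : R) (k : R -> R) : 0 < s -> continuous k 0 ->
  filterlim (fun y => Rpower y s * k y) (at_right 0) (locally 0).
Proof.
  intros Hs Hk.
  assert (H := filterlim_comp_2 _ _ Rmult (Rpower_at_0_right s Hs) (continuous_at_right k 0 Hk)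
                 (filterlim_mult (K := R_AbsRing) 0 (k 0))).
  change (mult 0 (k 0)) with (0 * k 0) in H. rewrite Rmult_0_l in H. exact H.
Qed.

Lemma is_lim_exp_neg_mul (k : R) : 0 < k -> is_lim (fun t => exp (- k * t)) p_infty 0.
Proof.
  intros Hk. apply (is_lim_comp exp (fun t => - k * t) p_infty 0 m_infty).
  - apply is_lim_exp_m.
  - assert (H := is_lim_scal_l (fun t => t) (- k) p_infty p_infty (is_lim_id p_infty)).
    rewrite (is_Rbar_mult_unique _ _ _
               (is_Rbar_mult_sym _ _ _ (is_Rbar_mult_p_infty_neg (- k) ltac:(simpl; lra)))) in H.
    exact H.
  - exists 0. intros t _. discriminate.
Qed.

Lemma filterlim_p_infty_at_0_right (z : R -> R) (B k : R) : 0 < k ->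
  (forall t, 0 < z t <= B * exp (- k * t)) ->
  filterlim z (Rbar_locally p_infty) (at_right 0).
Proof.
  intros Hk Hz P [eps HP].
  assert (Hlim : is_lim (fun t => B * exp (- k * t)) p_infty 0).
  { replace (Finite 0) with (Rbar_mult B 0) by (simpl; f_equal; ring).
    apply is_lim_scal_l, is_lim_exp_neg_mul, Hk. }
  unfold filtermap. apply (filter_imp (fun t => ball 0 eps (B * exp (- k * t)))).
  2: exact (Hlim _ (locally_ball 0 eps)).
  intros t Ht. apply HP; [|apply Hz].
  specialize (Hz t). apply Rabs_def2 in Ht.
  apply Rabs_def1; unfold minus, plus, opp in *; simpl in *; lra.
Qed.

Lemma filterlim_scal_comp_at_0_right (F z : R -> R) (K B k : R) : 0 < k ->
  filterlim F (at_right 0) (locally 0) -> (forall t, 0 < z t <= B * exp (- k * t)) ->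
  filterlim (fun t => K * F (z t)) (Rbar_locally p_infty) (locally 0).
Proof.
  intros Hk HF Hz. rewrite <- (Rmult_0_r K).
  eapply filterlim_comp;
    [eapply filterlim_comp; [apply (filterlim_p_infty_at_0_right z B k Hk Hz)|exact HF]|].
  apply (filterlim_scal_r (V := R_NormedModule) K 0).
Qed.

(* [Rpower 0 s = 1], so integrands such as [Rpower y s / (1 - y)] are
   discontinuous at 0: only their limit from the right is used. *)
Lemma is_RInt_0_of_primitive (f F : R -> R) (b c : R) : 0 < b < c ->
  (forall y, 0 < y < c -> continuous f y) ->
  filterlim f (at_right 0) (locally 0) ->
  (forall y, 0 < y < c -> is_derive F y (f y)) ->
  filterlim F (at_right 0) (locally 0) ->
  is_RInt f 0 b (F b).
Proof.
  intros Hb Hfc Hf0 HF HF0.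
  destruct (C0_extension_left f 0 0 c ltac:(lra) Hfc Hf0) as [g [Hgc [Hgf _]]].
  assert (Hg : forall x, 0 < x <= b -> is_RInt g x b (F b - F x)).
  { intros x Hx. apply (is_RInt_derive F g x b); rewrite Rmin_left, Rmax_right by lra;
      intros u Hu; [rewrite Hgf by lra; apply HF|apply Hgc]; lra. }
  set (J := fun z => RInt g z b).
  assert (HJ : forall z, - b < z <= b -> is_RInt g z b (J z)).
  { intros z Hz. apply (@RInt_correct R_CompleteNormedModule), ex_RInt_continuous.
    rewrite Rmin_left, Rmax_right by lra. intros u Hu. apply Hgc. lra. }
  assert (HJ0 : J 0 = F b).
  { apply (filterlim_locally_unique (F := at_right 0) J).
    - apply continuous_at_right, (continuous_RInt_2 g 0 b J).
      exists (mkposreal b (proj1 Hb)). intros z Hz. apply HJ.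
      apply Rabs_def2 in Hz. rewrite Rminus_0_r in Hz. simpl in Hz. lra.
    - rewrite <- (Rminus_0_r (F b)).
      apply (filterlim_ext_loc (fun x => F b - F x)).
      + exists (mkposreal b (proj1 Hb)). intros x Hx Hx0. symmetry.
        apply is_RInt_unique, Hg. apply Rabs_def2 in Hx. rewrite Rminus_0_r in Hx.
        simpl in Hx. lra.
      + assert (Hc : continuous (fun u => F b - u) 0).
        { apply (continuous_minus (fun _ : R => F b) (fun u : R => u));
            [apply continuous_const|apply continuous_id]. }
        exact (filterlim_comp _ _ _ F _ _ _ _ HF0 Hc). }
  apply (is_RInt_ext g); [intros x Hx; rewrite Rmin_left, Rmax_right in Hx by lra; apply Hgf; lra|].
  rewrite <- HJ0. apply HJ. lra.
Qed.

Lemma filter_prod_at_point_0_p_infty (P : R -> Prop) : (forall x, 0 <= x -> P x) ->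
  filter_prod (at_point 0) (Rbar_locally p_infty)
    (fun ab => forall x, Rmin (fst ab) (snd ab) <= x <= Rmax (fst ab) (snd ab) -> P x).
Proof.
  intros HP. apply Filter_prod with (fun a => a = 0) (fun b => 0 < b).
  - reflexivity.
  - exists 0. auto.
  - intros a b -> Hb x Hx. simpl in Hx. rewrite Rmin_left, Rmax_right in Hx by lra.
    apply HP. lra.
Qed.

Lemma is_RInt_gen_0_p_infty_of_primitive (g G : R -> R) (d : R) : 0 < d ->
  (forall t, - d < t -> is_derive G t (g t)) ->
  (forall t, 0 <= t -> continuous g t) ->
  filterlim G (Rbar_locally p_infty) (locally 0) ->
  is_RInt_gen g (at_point 0) (Rbar_locally p_infty) (- G 0).
Proof.
  intros Hd HG Hgc HGlim.
  assert (HDG : forall t, - d < t -> Derive G t = g t).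
  { intros t Ht. apply is_derive_unique, HG, Ht. }
  replace (- G 0) with (0 - G 0) by ring.
  apply (is_RInt_gen_ext (Derive G)).
  { eapply filter_imp; [|apply (filter_prod_at_point_0_p_infty (fun x => Derive G x = g x))].
    - intros ab Hab x Hx. apply Hab. destruct Hx. split; apply Rlt_le; assumption.
    - intros x Hx. apply HDG. lra. }
  apply is_RInt_gen_Derive.
  - apply filter_prod_at_point_0_p_infty. intros x Hx. exists (g x). apply HG. lra.
  - apply filter_prod_at_point_0_p_infty. intros x Hx.
    apply (continuous_ext_loc _ g); [|apply Hgc, Hx].
    apply (filter_imp (fun u => - d < u)); [intros u Hu; symmetry; apply HDG, Hu|].
    apply open_gt. lra.
  - intros P HP. exact (locally_singleton _ _ HP).
  - exact HGlim.
Qed.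

Lemma exp1_expectation_of_primitive (c : R) (h H : R -> R) (d : R) : 0 < d ->
  (forall t, - d < t -> is_derive H t (h t * exp (- t))) ->
  (forall t, 0 <= t -> continuous h t) ->
  filterlim H (Rbar_locally p_infty) (locally 0) ->
  exp1_expectation (fun t => c + h t) (c - H 0).
Proof.
  intros Hd HH Hhc HHlim.
  replace (c - H 0) with (- (- c * exp (- 0) + H 0)) by (rewrite Ropp_0, exp_0; ring).
  apply (is_RInt_gen_0_p_infty_of_primitive _ (fun t => - c * exp (- t) + H t) d Hd).
  - intros t Ht.
    assert (He : is_derive (fun t => - c * exp (- t)) t (c * exp (- t)))
      by (auto_derive; [exact I|ring]).
    replace ((c + h t) * exp (- t)) with (plus (c * exp (- t)) (h t * exp (- t)))
      by (unfold plus; simpl; ring).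
    apply (is_derive_plus _ H); [exact He|apply HH, Ht].
  - intros t Ht. apply (continuous_mult (fun t => c + h t) (fun t => exp (- t))).
    + apply (continuous_plus (fun _ => c) h); [apply continuous_const|apply Hhc; assumption].
    + apply (ex_derive_continuous (fun t => exp (- t))). auto_derive. exact I.
  - assert (Hexp : is_lim (fun t => - c * exp (- t)) p_infty 0).
    { replace (Finite 0) with (Rbar_mult (- c) 0) by (simpl; f_equal; ring).
      apply is_lim_scal_l, (is_lim_ext (fun t => exp (- 1 * t))); [intros t; f_equal; ring|].
      apply is_lim_exp_neg_mul, Rlt_0_1. }
    assert (Hsum := filterlim_comp_2 _ _ Rplus Hexp HHlim
                      (filterlim_plus (V := R_NormedModule) 0 0)).
    change (plus 0 0) with (0 + 0) in Hsum. rewrite Rplus_0_l in Hsum. exact Hsum.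
Qed.

Lemma exp1_expectation_ext (f g : R -> R) (v : R) :
  (forall t, f t = g t) -> exp1_expectation f v -> exp1_expectation g v.
Proof.
  intros Hfg. apply is_RInt_gen_ext. apply filter_forall. intros ab x _. rewrite Hfg. reflexivity.
Qed.

Lemma is_lim_seq_affine_ratio (x y : R) : 0 < y ->
  is_lim_seq (fun n => (x + INR n) / (y + INR n)) 1.
Proof.
  intros Hy.
  apply is_lim_seq_ext with (fun n => 1 + (x - y) * / (y + INR n)).
  { intros n. pose proof (pos_INR n). field. lra. }
  replace (Finite 1) with (Finite (1 + (x - y) * 0)) by (f_equal; ring).
  apply is_lim_seq_plus'; [apply is_lim_seq_const|].
  apply is_lim_seq_mult'; [apply is_lim_seq_const|].
  replace (Finite 0) with (Rbar_inv p_infty) by reflexivity.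
  apply is_lim_seq_inv; [|discriminate].
  eapply is_lim_seq_plus; [apply is_lim_seq_const|apply is_lim_seq_INR|reflexivity].
Qed.

Lemma CV_radius_pos_ratio_1 (a : nat -> R) : (forall n, 0 < a n) ->
  is_lim_seq (fun n => a (S n) / a n) 1 -> CV_radius a = 1.
Proof.
  intros Ha H. rewrite <- Rinv_1. apply CV_radius_finite_DAlembert; [|lra|].
  - intros n. apply Rgt_not_eq, Ha.
  - apply (is_lim_seq_ext (fun n => a (S n) / a n)); [|exact H].
    intros n. symmetry. apply Rabs_pos_eq, Rlt_le, Rdiv_lt_0_compat; apply Ha.
Qed.

Lemma continuous_PSeries_0 (c : nat -> R) : Rbar_lt 0 (CV_radius c) -> continuous (PSeries c) 0.
Proof.
  intros Hc. apply (ex_derive_continuous (PSeries c)). eexists.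
  apply is_derive_PSeries. rewrite Rabs_R0. exact Hc.
Qed.

Lemma is_series_PSeries (c : nat -> R) (x : R) : Rbar_lt (Rabs x) (CV_radius c) ->
  is_series (fun k => c k * x ^ k) (PSeries c x).
Proof. intros Hx. apply is_pseries_R, PSeries_correct, CV_radius_inside, Hx. Qed.

Lemma is_derive_Rpower_mul_PSeries (s y : R) (c : nat -> R) :
  0 < y -> Rbar_lt (Rabs y) (CV_radius c) ->
  is_derive (fun y => Rpower y (s + 1) * PSeries c y) y
    (Rpower y s * PSeries (fun k => (s + INR k + 1) * c k) y).
Proof.
  intros Hy Hc.
  assert (Hc' : Rbar_lt (Rabs y) (CV_radius (PS_derive c))) by (rewrite CV_radius_derive; exact Hc).
  assert (H := is_derive_mult (fun y => Rpower y (s + 1)) (PSeries c) y _ _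
     (is_derive_Rpower (s + 1) y Hy) (is_derive_PSeries c y Hc) Rmult_comm).
  replace (s + 1 - 1) with s in H by ring.
  match type of H with is_derive _ _ ?L =>
    replace (Rpower y s * PSeries (fun k => (s + INR k + 1) * c k) y) with L; [exact H|] end.
  unfold plus, mult; simpl.
  rewrite (PSeries_ext (fun k => (s + INR k + 1) * c k)
     (PS_plus (PS_scal (s + 1) c) (PS_incr_1 (PS_derive c)))).
  2:{ intros [|m]; unfold PS_plus, PS_scal, PS_incr_1, PS_derive, plus, scal, mult, zero;
      cbn -[INR]; unfold mult; cbn -[INR]; rewrite ?S_INR; simpl; ring. }
  rewrite PSeries_plus.
  2:{ apply ex_pseries_scal; [apply Rmult_comm|apply CV_radius_inside, Hc]. }
  2:{ apply ex_pseries_incr_1, CV_radius_inside, Hc'. }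
  rewrite PSeries_scal, PSeries_incr_1, Rpower_plus, Rpower_1 by exact Hy. ring.
Qed.

Lemma Rpower_mul_PSeries_at_0_right (s : R) (c : nat -> R) :
  0 < s -> Rbar_lt 0 (CV_radius c) ->
  filterlim (fun y => Rpower y s * PSeries c y) (at_right 0) (locally 0).
Proof. intros Hs Hc. apply Rpower_mul_at_0_right, continuous_PSeries_0; assumption. Qed.

Definition neg_binom_coef (a : R) (k : nat) : R := rising a k / INR (fact k).

Lemma rising_gt_0 (a : R) (k : nat) : 0 < a -> 0 < rising a k.
Proof.
  intros Ha. induction k as [|k IH]; simpl; [lra|].
  apply Rmult_lt_0_compat; [exact IH|]. pose proof (pos_INR k). lra.
Qed.

Lemma neg_binom_coef_gt_0 (a : R) (k : nat) : 0 < a -> 0 < neg_binom_coef a k.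
Proof.
  intros Ha. apply Rdiv_lt_0_compat; [apply rising_gt_0, Ha|apply INR_fact_lt_0].
Qed.

Lemma neg_binom_coef_S (a : R) (k : nat) :
  neg_binom_coef a (S k) * (INR k + 1) = neg_binom_coef a k * (a + INR k).
Proof.
  unfold neg_binom_coef. change (rising a (S k)) with (rising a k * (a + INR k)).
  rewrite fact_simpl, mult_INR, S_INR.
  pose proof (INR_fact_neq_0 k). pose proof (pos_INR k). field. lra.
Qed.

Lemma CV_radius_neg_binom_coef (a : R) : 0 < a -> CV_radius (neg_binom_coef a) = 1.
Proof.
  intros Ha. apply CV_radius_pos_ratio_1; [intros n; apply neg_binom_coef_gt_0, Ha|].
  apply (is_lim_seq_ext (fun n => (a + INR n) / (1 + INR n)));
    [|apply is_lim_seq_affine_ratio; lra].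
  intros n. pose proof (neg_binom_coef_S a n). pose proof (neg_binom_coef_gt_0 a n Ha).
  pose proof (pos_INR n). apply Rmult_eq_reg_r with (neg_binom_coef a n * (1 + INR n)); [|nra].
  field_simplify; nra.
Qed.

Lemma PSeries_derive_neg_binom_coef (a y : R) : 0 < a -> Rabs y < 1 ->
  (1 - y) * PSeries (PS_derive (neg_binom_coef a)) y = a * PSeries (neg_binom_coef a) y.
Proof.
  intros Ha Hy. set (b := neg_binom_coef a).
  assert (Hr : Rbar_lt (Rabs y) (CV_radius (PS_derive b)))
    by (rewrite CV_radius_derive; unfold b; rewrite CV_radius_neg_binom_coef by exact Ha; exact Hy).
  transitivity (PSeries (PS_derive b) y - y * PSeries (PS_derive b) y); [ring|].
  rewrite <- PSeries_incr_1, <- PSeries_scal, <- PSeries_minus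
    by (apply ex_pseries_incr_1 || idtac; apply CV_radius_inside, Hr).
  apply PSeries_ext. intros [|m];
    unfold PS_minus, PS_scal, PS_incr_1, PS_derive, minus, plus, opp, scal, mult, zero;
    cbn -[INR b]; unfold mult; cbn -[INR b].
  - unfold b, neg_binom_coef. simpl. field.
  - pose proof (neg_binom_coef_S a (S m)). pose proof (neg_binom_coef_S a m).
    fold b in H, H0. rewrite !S_INR in *. nra.
Qed.

Lemma PSeries_neg_binom_coef (a y : R) : 0 < a -> Rabs y < 1 ->
  PSeries (neg_binom_coef a) y = Rpower (1 - y) (- a).
Proof.
  intros Ha Hy. set (b := neg_binom_coef a).
  set (h := fun t => PSeries b t * Rpower (1 - t) a).
  assert (Hh' : forall t, Rabs (t - 0) <= Rabs y -> is_derive h t 0).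
  { intros t Ht. rewrite Rminus_0_r in Ht.
    assert (Ht1 : Rabs t < 1) by lra.
    assert (Ht0 : 0 < 1 - t) by (apply Rabs_def2 in Ht1; lra).
    assert (Hr : Rbar_lt (Rabs t) (CV_radius b))
      by (unfold b; rewrite CV_radius_neg_binom_coef by exact Ha; exact Ht1).
    assert (HR : is_derive (fun t => Rpower (1 - t) a) t (- a * Rpower (1 - t) a / (1 - t))).
    { unfold Rpower. auto_derive; [lra|]. replace (1 + - t) with (1 - t) by ring. field. lra. }
    assert (H := is_derive_mult (PSeries b) (fun t => Rpower (1 - t) a) t _ _
       (is_derive_PSeries b t Hr) HR Rmult_comm).
    match type of H with is_derive _ _ ?L => replace 0 with L; [exact H|] end.
    unfold plus, mult; simpl.
    assert (HP := PSeries_derive_neg_binom_coef a t Ha Ht1). fold b in HP.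
    apply Rmult_eq_reg_r with (1 - t); [|lra].
    field_simplify; [|lra].
    transitivity (Rpower (1 - t) a * ((1 - t) * PSeries (PS_derive b) t - a * PSeries b t));
      [ring|].
    rewrite HP. ring. }
  destruct (MVT_cor4 h (fun _ => 0) 0 (Rabs y) Hh' y) as [c [Hc _]];
    [rewrite Rminus_0_r; apply Rle_refl|].
  unfold h in Hc. rewrite PSeries_0, Rminus_0_r, Rpower_1_l in Hc.
  replace (b 0%nat) with 1 in Hc by (unfold b, neg_binom_coef; simpl; field).
  rewrite Rpower_Ropp. pose proof (Rpower_gt_0 (1 - y) a).
  apply Rmult_eq_reg_r with (Rpower (1 - y) a); [|lra].
  rewrite Rinv_l by lra. lra.
Qed.

Definition p11_coef (s : R) (k : nat) : R := / (s + INR k + 1).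
Definition p21_coef (s : R) (k : nat) : R := neg_binom_coef (s + 1) k / (s + INR k + 1).
Definition p11_primitive (s y : R) : R := Rpower y (s + 1) * PSeries (p11_coef s) y.
Definition p21_primitive (s y : R) : R := Rpower y (s + 1) * PSeries (p21_coef s) y.

Lemma CV_radius_p11_coef (s : R) : 0 < s -> CV_radius (p11_coef s) = 1.
Proof.
  intros Hs. apply CV_radius_pos_ratio_1.
  - intros n. apply Rinv_0_lt_compat. pose proof (pos_INR n). lra.
  - apply (is_lim_seq_ext (fun n => (s + 1 + INR n) / (s + 2 + INR n)));
      [|apply is_lim_seq_affine_ratio; lra].
    intros n. unfold p11_coef. rewrite S_INR. pose proof (pos_INR n). field. lra.
Qed.

Lemma CV_radius_p21_coef (s : R) : 0 < s -> CV_radius (p21_coef s) = 1.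
Proof.
  intros Hs. apply CV_radius_pos_ratio_1.
  - intros n. apply Rdiv_lt_0_compat; [apply neg_binom_coef_gt_0; lra|].
    pose proof (pos_INR n). lra.
  - apply (is_lim_seq_ext (fun n => (s + 1 + INR n) / (1 + INR n)
                                    * ((s + 1 + INR n) / (s + 2 + INR n)))).
    2:{ replace (Finite 1) with (Finite (1 * 1)) by (f_equal; ring).
        apply is_lim_seq_mult'; apply is_lim_seq_affine_ratio; lra. }
    intros n. unfold p21_coef. pose proof (pos_INR n).
    pose proof (neg_binom_coef_gt_0 (s + 1) n ltac:(lra)).
    assert (E : neg_binom_coef (s + 1) (S n)
                = neg_binom_coef (s + 1) n * (s + 1 + INR n) / (INR n + 1))
      by (rewrite <- (neg_binom_coef_S (s + 1) n); field; lra).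
    rewrite E, S_INR. field. repeat split; lra.
Qed.

Lemma is_derive_p11_primitive (s y : R) : 0 < s -> 0 < y < 1 ->
  is_derive (p11_primitive s) y (Rpower y s / (1 - y)).
Proof.
  intros Hs Hy.
  assert (Hr : Rbar_lt (Rabs y) (CV_radius (p11_coef s)))
    by (rewrite CV_radius_p11_coef, Rabs_pos_eq by lra; simpl; lra).
  assert (H := is_derive_Rpower_mul_PSeries s y _ (proj1 Hy) Hr).
  rewrite (PSeries_ext _ (fun _ => 1)) in H.
  2:{ intros n. unfold p11_coef. pose proof (pos_INR n). field. lra. }
  unfold PSeries in H. rewrite (Series_ext _ (fun k => y ^ k)), Series_geom in H.
  - exact H.
  - rewrite Rabs_pos_eq; lra.
  - intros k. ring.
Qed.

Lemma is_derive_p21_primitive (s y : R) : 0 < s -> 0 < y < 1 ->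
  is_derive (p21_primitive s) y (Rpower y s * Rpower (1 - y) (- s - 1)).
Proof.
  intros Hs Hy.
  assert (Hr : Rbar_lt (Rabs y) (CV_radius (p21_coef s)))
    by (rewrite CV_radius_p21_coef, Rabs_pos_eq by lra; simpl; lra).
  assert (H := is_derive_Rpower_mul_PSeries s y _ (proj1 Hy) Hr).
  rewrite (PSeries_ext _ (neg_binom_coef (s + 1))), PSeries_neg_binom_coef in H.
  - replace (- s - 1) with (- (s + 1)) by ring. exact H.
  - lra.
  - rewrite Rabs_pos_eq; lra.
  - intros n. unfold p21_coef. pose proof (pos_INR n). field. lra.
Qed.

Lemma is_RInt_p11_integrand (s b : R) : 0 < s -> 0 < b < 1 ->
  is_RInt (fun y => Rpower y s / (1 - y)) 0 b (p11_primitive s b).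
Proof.
  intros Hs Hb. apply (is_RInt_0_of_primitive _ _ b 1 Hb).
  - intros y Hy. apply (ex_derive_continuous (fun y => Rpower y s / (1 - y))).
    unfold Rpower. auto_derive. lra.
  - apply Rpower_mul_at_0_right; [exact Hs|].
    apply (ex_derive_continuous (fun y => / (1 - y))). auto_derive. lra.
  - intros y Hy. apply is_derive_p11_primitive; assumption.
  - apply Rpower_mul_PSeries_at_0_right; [lra|].
    rewrite CV_radius_p11_coef by exact Hs. simpl. lra.
Qed.

Lemma is_RInt_p21_integrand (s b : R) : 0 < s -> 0 < b < 1 ->
  is_RInt (fun y => Rpower y s * Rpower (1 - y) (- s - 1)) 0 b (p21_primitive s b).
Proof.
  intros Hs Hb. apply (is_RInt_0_of_primitive _ _ b 1 Hb).
  - intros y Hy. apply (ex_derive_continuous (fun y => Rpower y s * Rpower (1 - y) (- s - 1))).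
    unfold Rpower. auto_derive. lra.
  - apply Rpower_mul_at_0_right; [exact Hs|].
    apply (ex_derive_continuous (fun y => Rpower (1 - y) (- s - 1))).
    unfold Rpower. auto_derive. lra.
  - intros y Hy. apply is_derive_p21_primitive; assumption.
  - apply Rpower_mul_PSeries_at_0_right; [lra|].
    rewrite CV_radius_p21_coef by exact Hs. simpl. lra.
Qed.

Lemma is_series_p11 (s b : R) : 0 < s -> 0 < b < 1 ->
  is_series (fun k => b ^ (k + 1) / (s + INR k + 1)) (Rpower b (- s) * p11_primitive s b).
Proof.
  intros Hs Hb.
  replace (Rpower b (- s) * p11_primitive s b) with (b * PSeries (p11_coef s) b).
  2:{ unfold p11_primitive. rewrite <- Rmult_assoc, <- Rpower_plus.
      replace (- s + (s + 1)) with 1 by ring. rewrite Rpower_1 by lra. reflexivity. }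
  apply (is_series_ext (fun k => b * (p11_coef s k * b ^ k))).
  - intros k. unfold p11_coef. rewrite pow_add. pose proof (pos_INR k). simpl. field. lra.
  - apply (is_series_scal_l (V := R_NormedModule)), is_series_PSeries.
    rewrite CV_radius_p11_coef, Rabs_pos_eq by lra. simpl. lra.
Qed.

Lemma is_series_p21 (s z : R) : 0 < s -> 0 < z < 1 ->
  is_series (fun k => neg_binom_coef (s + 1) k * Rpower z (s + INR k + 1) / (s + INR k + 1))
    (p21_primitive s z).
Proof.
  intros Hs Hz.
  apply (is_series_ext (fun k => Rpower z (s + 1) * (p21_coef s k * z ^ k))).
  - intros k. unfold p21_coef.
    assert (E : Rpower z (s + INR k + 1) = Rpower z (s + 1) * z ^ k).
    { replace (s + INR k + 1) with (s + 1 + INR k) by ring.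
      rewrite Rpower_plus, Rpower_pow by lra. reflexivity. }
    rewrite E. pose proof (pos_INR k). simpl. field. lra.
  - apply (is_series_scal_l (V := R_NormedModule)), is_series_PSeries.
    rewrite CV_radius_p21_coef, Rabs_pos_eq by lra. simpl. lra.
Qed.

Lemma is_derive_p11_primitive_exp (s k q t : R) : 0 < s -> s * k = 1 -> 0 < q ->
  q * exp (- k * t) < 1 ->
  is_derive (fun t => p11_primitive s (q * exp (- k * t))) t
    (- k * Rpower q s * exp (- t) * (q * exp (- k * t) / (1 - q * exp (- k * t)))).
Proof.
  intros Hs Hsk Hq Hlt. pose proof (exp_pos (- k * t)) as He.
  assert (Hy : is_derive (fun t => q * exp (- k * t)) t (- k * (q * exp (- k * t))))
    by (auto_derive; [exact I|ring]).
  assert (Hy01 : 0 < q * exp (- k * t) < 1) by (split; nra).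
  assert (H := is_derive_comp (p11_primitive s) _ t _ _
                 (is_derive_p11_primitive s _ Hs Hy01) Hy).
  rewrite Rpower_mul_exp in H by assumption.
  unfold scal in H; simpl in H; unfold mult in H; simpl in H.
  match type of H with is_derive _ _ ?L => replace (- k * _ * _ * _) with L; [exact H|] end.
  field. lra.
Qed.

Lemma is_derive_p21_primitive_logistic (s k C t : R) : 0 < s -> s * k = 1 -> 0 < C ->
  is_derive (fun t => p21_primitive s (C * exp (- k * t) / (1 + C * exp (- k * t)))) t
    (- k * Rpower C s * exp (- t) * (C * exp (- k * t) / (1 + C * exp (- k * t)))).
Proof.
  intros Hs Hsk HC. pose proof (exp_pos (- k * t)) as He.
  assert (Hy : is_derive (fun t => C * exp (- k * t) / (1 + C * exp (- k * t))) t
                 (- k * (C * exp (- k * t)) / (1 + C * exp (- k * t)) ^ 2))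
    by (auto_derive; [nra|field; nra]).
  set (x := C * exp (- k * t)) in *. assert (Hx : 0 < x) by (unfold x; nra).
  destruct (Rdiv_1_plus_bounds x Hx) as [Hz _].
  assert (H := is_derive_comp (p21_primitive s)
                 (fun t => C * exp (- k * t) / (1 + C * exp (- k * t))) t _ _
                 (is_derive_p21_primitive s _ Hs Hz) Hy).
  rewrite Rpower_logistic in H by exact Hx. unfold x in H.
  rewrite Rpower_mul_exp in H by assumption. fold x in H.
  unfold scal in H; simpl in H; unfold mult in H; simpl in H.
  match type of H with is_derive _ _ ?L => replace (- k * _ * _ * _) with L; [exact H|] end.
  field. lra.
Qed.

(* [mu] is [riccati_sol r1 r2 beta b] and [nu] is [riccati_sol r1 r2 beta (r1/r2)]. *)
Definition riccati_sol (r1 r2 beta q t : R) : R :=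
  r1 + (r1 - r2) * (q * exp (- beta * (r1 - r2) * t / 2)
                    / (1 - q * exp (- beta * (r1 - r2) * t / 2))).

Lemma exp1_expectation_riccati_sol_pos (r1 r2 beta q : R) : 0 < beta -> r2 < r1 -> 0 < q < 1 ->
  exp1_expectation (riccati_sol r1 r2 beta q)
    (r1 + 2 * Rpower q (- (1 / ((r1 - r2) / 2 * beta))) / beta
          * p11_primitive (1 / ((r1 - r2) / 2 * beta)) q).
Proof.
  intros Hb H12 Hq.
  set (k := (r1 - r2) / 2 * beta). set (s := 1 / k).
  assert (Hk : 0 < k) by (unfold k; nra).
  assert (Hs : 0 < s) by (unfold s; apply Rdiv_lt_0_compat; lra).
  assert (Hsk : s * k = 1) by (unfold s; field; lra).
  assert (Hexp : forall t, exp (- beta * (r1 - r2) * t / 2) = exp (- k * t))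
    by (intros t; f_equal; unfold k; field).
  assert (Hlnq : ln q < 0) by (rewrite <- ln_1; apply ln_increasing; lra).
  assert (Hd : 0 < - ln q / k) by (apply Rdiv_lt_0_compat; lra).
  set (K := 2 / beta * Rpower q (- s)).
  replace (r1 + 2 * Rpower q (- s) / beta * p11_primitive s q)
    with (r1 - (- K) * p11_primitive s (q * exp (- k * 0)))
    by (rewrite Rmult_0_r, exp_0, Rmult_1_r; unfold K; field; lra).
  apply (exp1_expectation_ext
           (fun t => r1 + (r1 - r2) * (q * exp (- k * t) / (1 - q * exp (- k * t)))));
    [intros t; unfold riccati_sol; rewrite Hexp; reflexivity|].
  apply (exp1_expectation_of_primitive r1 _ (fun t => - K * p11_primitive s (q * exp (- k * t)))
           (- ln q / k) Hd).
  - intros t Ht.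
    assert (H := is_derive_scal _ t (- K) _
                   (is_derive_p11_primitive_exp s k q t Hs Hsk (proj1 Hq)
                      (mul_exp_lt_1 q k t Hq Hk ltac:(lra)))).
    unfold scal in H; simpl in H; unfold mult in H; simpl in H.
    match type of H with is_derive _ _ ?L => replace (_ * exp (- t)) with L; [exact H|] end.
    assert (Hqs : Rpower q (- s) * Rpower q s = 1)
      by (rewrite <- Rpower_plus, Rplus_opp_l; apply Rpower_O; lra).
    replace (r1 - r2) with (2 / beta * k) by (unfold k; field; lra).
    unfold K. transitivity (2 / beta * k * (Rpower q (- s) * Rpower q s) * exp (- t)
      * (q * exp (- k * t) / (1 - q * exp (- k * t)))); [ring|].
    rewrite Hqs. ring.
  - intros t Ht. pose proof (mul_exp_lt_1 q k t Hq Hk ltac:(lra)).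
    apply (ex_derive_continuous
             (fun t => (r1 - r2) * (q * exp (- k * t) / (1 - q * exp (- k * t))))).
    auto_derive. lra.
  - apply (filterlim_scal_comp_at_0_right _ _ (- K) q k Hk).
    + apply Rpower_mul_PSeries_at_0_right; [lra|].
      rewrite CV_radius_p11_coef by exact Hs. simpl. lra.
    + intros t. pose proof (exp_pos (- k * t)). split; [nra|lra].
Qed.

Lemma exp1_expectation_riccati_sol_neg (r1 r2 beta q : R) : 0 < beta -> r2 < r1 -> q < 0 ->
  exp1_expectation (riccati_sol r1 r2 beta q)
    (r1 - 2 * Rpower (- q) (- (1 / ((r1 - r2) / 2 * beta))) / beta
          * p21_primitive (1 / ((r1 - r2) / 2 * beta)) (- q / (1 + - q))).
Proof.
  intros Hb H12 Hq.
  set (k := (r1 - r2) / 2 * beta). set (s := 1 / k). set (C := - q).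
  assert (HC : 0 < C) by (unfold C; lra).
  assert (Hk : 0 < k) by (unfold k; nra).
  assert (Hs : 0 < s) by (unfold s; apply Rdiv_lt_0_compat; lra).
  assert (Hsk : s * k = 1) by (unfold s; field; lra).
  set (z := fun t => C * exp (- k * t) / (1 + C * exp (- k * t))).
  apply (exp1_expectation_ext (fun t => r1 + (r1 - r2) * - z t)).
  { intros t. unfold riccati_sol, z, C. cbv beta.
    replace (- beta * (r1 - r2) * t / 2) with (- k * t) by (unfold k; field).
    pose proof (exp_pos (- k * t)). field. nra. }
  set (K := 2 / beta * Rpower C (- s)).
  replace (r1 - 2 * Rpower C (- s) / beta * p21_primitive s (C / (1 + C)))
    with (r1 - K * p21_primitive s (z 0))
    by (unfold z; rewrite Rmult_0_r, exp_0, Rmult_1_r; unfold K; field; lra).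
  apply (exp1_expectation_of_primitive r1 _ (fun t => K * p21_primitive s (z t)) 1 Rlt_0_1).
  - intros t _.
    assert (H := is_derive_scal _ t K _ (is_derive_p21_primitive_logistic s k C t Hs Hsk HC)).
    unfold scal in H; simpl in H; unfold mult in H; simpl in H.
    match type of H with is_derive _ _ ?L => replace (_ * exp (- t)) with L; [exact H|] end.
    assert (HCs : Rpower C (- s) * Rpower C s = 1)
      by (rewrite <- Rpower_plus, Rplus_opp_l; apply Rpower_O; lra).
    replace (r1 - r2) with (2 / beta * k) by (unfold k; field; lra).
    unfold K, z. transitivity (- (2 / beta * k * (Rpower C (- s) * Rpower C s) * exp (- t)
      * (C * exp (- k * t) / (1 + C * exp (- k * t))))); [ring|].
    rewrite HCs. ring.
  - intros t _. pose proof (exp_pos (- k * t)).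
    apply (ex_derive_continuous (fun t => (r1 - r2) * - z t)). unfold z. auto_derive. nra.
  - apply (filterlim_scal_comp_at_0_right _ _ K C k Hk).
    + apply Rpower_mul_PSeries_at_0_right; [lra|].
      rewrite CV_radius_p21_coef by exact Hs. simpl. lra.
    + intros t. pose proof (exp_pos (- k * t)).
      destruct (Rdiv_1_plus_bounds (C * exp (- k * t))) as [[Hz0 _] Hz]; [nra|].
      unfold z. lra.
Qed.

Lemma r1_r2_bounds (th1 th2 beta : R) : 0 < th1 -> 0 < th2 -> 0 < beta ->
  0 < r1 th1 th2 beta < 1 /\ r2 th1 th2 beta < 0.
Proof.
  intros h1 h2 hb. unfold r1, r2.
  assert (Hf : 0 < phi th1 th2 beta) by (unfold phi, theta; apply Rdiv_lt_0_compat; lra).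
  assert (Hp : 0 < pp th1 th2 < 1).
  { unfold pp, theta. split; [apply Rdiv_lt_0_compat; lra|].
    apply Rmult_lt_reg_r with (th1 + th2); [lra|].
    unfold Rdiv. rewrite Rmult_assoc, Rinv_l; lra. }
  set (f := phi th1 th2 beta) in *. set (p := pp th1 th2) in *.
  set (D := (1 - f) ^ 2 + 4 * f * p).
  assert (HD : 0 <= D) by (unfold D; pose proof (pow2_ge_0 (1 - f)); nra).
  pose proof (sqrt_pos D). pose proof (sqrt_sqrt D HD).
  set (sD := sqrt D) in *.
  assert (Hlo : (1 - f) * (1 - f) < sD * sD) by (unfold D in *; nra).
  assert (Hhi : sD * sD < (1 + f) * (1 + f)) by (unfold D in *; nra).
  assert (1 - f < sD) by nra. assert (f - 1 < sD) by nra. assert (sD < 1 + f) by nra.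
  lra.
Qed.

Lemma aa_bb_cc_bounds (th1 th2 beta : R) : 0 < th1 -> 0 < th2 -> 0 < beta ->
  0 < aa th1 th2 beta /\ 0 < bb th1 th2 beta < 1 /\
  cc th1 th2 beta = - (r1 th1 th2 beta / r2 th1 th2 beta) /\ 0 < cc th1 th2 beta.
Proof.
  intros h1 h2 hb. unfold aa, bb, cc.
  destruct (r1_r2_bounds th1 th2 beta h1 h2 hb) as [[HR1 HR1'] HR2].
  assert (Hq : r1 th1 th2 beta / r2 th1 th2 beta < 0) by (apply Rdiv_pos_neg; lra).
  split; [lra|]. split; [|split; [field; lra|]].
  - split; [apply Rdiv_lt_0_compat; lra|].
    apply Rmult_lt_reg_r with (1 - r2 th1 th2 beta); [lra|].
    unfold Rdiv. rewrite Rmult_assoc, Rinv_l; lra.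
  - replace (- r1 th1 th2 beta / r2 th1 th2 beta) with (- (r1 th1 th2 beta / r2 th1 th2 beta))
      by (field; lra). lra.
Qed.

Theorem corollary2 (th1 th2 beta : R)
  (h1 : 0 < th1) (h2 : 0 < th2) (hb : 0 < beta) :
  let R1 := r1 th1 th2 beta in
  let A := aa th1 th2 beta in
  let B := bb th1 th2 beta in
  let C := cc th1 th2 beta in
  let al := 1 / (A * beta) in
  let I11 := fun y => Rpower y al / (1 - y) in
  let I21 := fun y => Rpower y al * Rpower (1 - y) (- al - 1) in
  let s11 := fun k : nat => B ^ (k + 1) / (al + INR k + 1) in
  let s21 := fun k : nat =>
    rising ((A * beta + 1) / (A * beta)) k / INR (fact k)
    * Rpower (C / (1 + C)) (al + INR k + 1) / (al + INR k + 1) in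
  (* p11 = E[mu(tau)] *)
  ex_RInt I11 0 B /\
  exp1_expectation (mu th1 th2 beta)
    (R1 + 2 * Rpower B (- al) / beta * RInt I11 0 B) /\
  ex_series s11 /\
  R1 + 2 * Rpower B (- al) / beta * RInt I11 0 B = R1 + 2 / beta * Series s11 /\
  (* p21 = E[nu(tau)] *)
  ex_RInt I21 0 (C / (1 + C)) /\
  exp1_expectation (nu th1 th2 beta)
    (R1 - 2 * Rpower C (- al) / beta * RInt I21 0 (C / (1 + C))) /\
  ex_series s21 /\
  R1 - 2 * Rpower C (- al) / beta * RInt I21 0 (C / (1 + C))
    = R1 - 2 * Rpower C (- al) / beta * Series s21.
Proof.
  intros R1 A B C al I11 I21 s11 s21.
  destruct (aa_bb_cc_bounds th1 th2 beta h1 h2 hb) as (HA & HB & HC & HC0).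
  fold A B C R1 in HA, HB, HC, HC0.
  assert (Hal : 0 < al) by (apply Rdiv_lt_0_compat, Rmult_lt_0_compat; lra).
  destruct (Rdiv_1_plus_bounds C HC0) as [Hz _].
  assert (HI11 : is_RInt I11 0 B (p11_primitive al B))
    by (apply is_RInt_p11_integrand; assumption).
  assert (HI21 : is_RInt I21 0 (C / (1 + C)) (p21_primitive al (C / (1 + C))))
    by (apply is_RInt_p21_integrand; assumption).
  assert (Hs11 : is_series s11 (Rpower B (- al) * p11_primitive al B))
    by (apply is_series_p11; assumption).
  assert (Hs21 : is_series s21 (p21_primitive al (C / (1 + C)))).
  { unfold s21. replace ((A * beta + 1) / (A * beta)) with (al + 1) by (unfold al; field; nra).
    apply is_series_p21; assumption. }
  rewrite (is_RInt_unique _ _ _ _ HI11), (is_RInt_unique _ _ _ _ HI21).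
  assert (H12 : r2 th1 th2 beta < R1) by (unfold R1; unfold A, aa in HA; lra).
  repeat split.
  - exists (p11_primitive al B). exact HI11.
  - apply exp1_expectation_riccati_sol_pos; [exact hb|exact H12|exact HB].
  - exists (Rpower B (- al) * p11_primitive al B). exact Hs11.
  - rewrite (is_series_unique _ _ Hs11). field. lra.
  - exists (p21_primitive al (C / (1 + C))). exact HI21.
  - rewrite HC in *. apply exp1_expectation_riccati_sol_neg; [exact hb|exact H12|lra].
  - exists (p21_primitive al (C / (1 + C))). exact Hs21.
  - rewrite (is_series_unique _ _ Hs21). reflexivity.
Qed.
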